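(* Let $q$ be a prime power, $n$ a positive integer with $\gcd(q,n)=1$, $s\in\mathbb{Z}_n^*$ and $t\in\mathbb{Z}_n$ with $qt\equiv t\pmod n$. A $q$-coset $Q\subseteq\mathbb{Z}_n$ satisfies $\rho_{s,t}(Q)=Q$ if and only if there exist $k\in Q$ and an integer $j\ge0$ such that $(q^j-s)k\equiv st\pmod n$.
   Context: The $q$-cosets of $\mathbb{Z}_n$ are the orbits of $\mu_q:i\mapsto qi\bmod n$. $\rho_{s,t}:\mathbb{Z}_n\to\mathbb{Z}_n$, $i\mapsto s(i+t)\bmod n$; it maps $q$-cosets to $q$-cosets. *)

(* Z_n is modelled by the residues {0,...,n-1} in nat;
   subsets of Z_n are predicates on nat (nat -> Prop) contained in [0,n). *)
From mathcomp Require Import all_boot all_order all_algebra.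
Set Implicit Arguments. Unset Strict Implicit. Unset Printing Implicit Defensive.

Definition prime_power (q : nat) : Prop :=
  exists p e : nat, prime p /\ 0 < e /\ q = p ^ e.

Definition mu (q n i : nat) : nat := (q * i) %% n.

Definition qcoset_of (q n i : nat) : nat -> Prop :=
  fun x => exists j : nat, x = iter j (mu q n) i.

Definition is_qcoset (q n : nat) (Q : nat -> Prop) : Prop :=
  exists2 i, i < n & forall x, Q x <-> qcoset_of q n i x.

Definition rho (n s t i : nat) : nat := (s * (i + t)) %% n.

Definition image_set (f : nat -> nat) (Q : nat -> Prop) : nat -> Prop :=
  fun x => exists2 y, Q y & x = f y.

Definition set_eq (A B : nat -> Prop) : Prop := forall x, A x <-> B x.

(* Since q t = t (mod n), the map rho_{s,t} commutes with multiplication by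
   q, so it sends the q-coset of k onto the q-coset of rho_{s,t}(k).  As the
   q-cosets partition Z_n (q is a unit mod n), a q-coset Q is
   rho_{s,t}-invariant iff rho_{s,t}(k) lies in Q for one (equivalently every)
   k in Q, i.e. iff s (k + t) = q^j k (mod n) for some j. *)

From mathcomp Require Import all_boot all_order all_algebra.
From mathcomp Require Import cyclic.

Set Implicit Arguments. Unset Strict Implicit. Unset Printing Implicit Defensive.

Definition qorbit (q n k : nat) : nat -> Prop :=
  fun x => exists j, x = q ^ j * k %% n.

Lemma set_eq_sym A B : set_eq A B -> set_eq B A.
Proof. by move=> AB x; apply: iff_sym. Qed.

Lemma set_eq_trans A B C : set_eq A B -> set_eq B C -> set_eq A C.
Proof. by move=> AB BC x; apply: iff_trans (AB x) (BC x). Qed.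

Lemma set_eq_congr A A' B B' :
  set_eq A A' -> set_eq B B' -> set_eq A B <-> set_eq A' B'.
Proof.
move=> AA' BB'; split=> AB.
  exact: set_eq_trans (set_eq_sym AA') (set_eq_trans AB BB').
exact: set_eq_trans AA' (set_eq_trans AB (set_eq_sym BB')).
Qed.

Lemma image_set_eq f A B : set_eq A B -> set_eq (image_set f A) (image_set f B).
Proof. by move=> AB x; split=> -[y /AB Ay ->]; exists y. Qed.

Lemma iter_mu q n i j : i < n -> iter j (mu q n) i = q ^ j * i %% n.
Proof.
move=> lt_in; elim: j => [|j IHj] /=; first by rewrite mul1n modn_small.
by rewrite IHj /mu modnMmr expnS mulnA.
Qed.

Lemma qcoset_ofE q n i : i < n -> set_eq (qcoset_of q n i) (qorbit q n i).
Proof. by move=> lt_in x; split=> -[j ->]; exists j; rewrite iter_mu. Qed.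

Lemma expn_mod_inv q n a : 0 < n -> coprime q n ->
  exists b, q ^ b * q ^ a = 1 %[mod n].
Proof.
move=> n_gt0 co_qn; exists (a * (totient n).-1).
rewrite -expnD -mulnSr prednK ?totient_gt0 // mulnC expnM.
by rewrite -modnXm Euler_exp_totient // modnXm exp1n.
Qed.

Lemma qorbit_sym q n i k : 0 < n -> coprime q n ->
  qorbit q n i k -> set_eq (qorbit q n k) (qorbit q n i).
Proof.
move=> n_gt0 co_qn [a ->] x; split=> -[m ->].
  by exists (m + a); rewrite modnMmr mulnA -expnD.
have [b inv_b] := expn_mod_inv a n_gt0 co_qn.
exists (m + b); rewrite modnMmr expnD -mulnA [q ^ b * _]mulnA.
by rewrite -[RHS]modnMmr -(modnMml (q ^ b * q ^ a)) inv_b modnMml mul1n modnMmr.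
Qed.

Section Rho.

Variables q n s t : nat.
Hypothesis qt_t : q * t = t %[mod n].

Lemma expnM_fixed e : q ^ e * t = t %[mod n].
Proof.
elim: e => [|e IHe]; first by rewrite mul1n.
by rewrite expnS -mulnA -modnMmr IHe modnMmr qt_t.
Qed.

Lemma rho_expM e x : rho n s t (q ^ e * x %% n) = q ^ e * rho n s t x %% n.
Proof.
rewrite /rho modnMmr -modnMmr modnDml -modnDmr -(expnM_fixed e) modnDmr modnMmr.
by congr (_ %% n); rewrite mulnCA -mulnDr.
Qed.

Lemma image_rho_qorbit k :
  set_eq (image_set (rho n s t) (qorbit q n k)) (qorbit q n (rho n s t k)).
Proof.
move=> x; split=> [[_ [e ->] ->]|[e ->]]; first by exists e; rewrite rho_expM.
by exists (q ^ e * k %% n); [exists e | rewrite rho_expM].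
Qed.

Lemma qorbit_rho_invariant k : 0 < n -> coprime q n ->
  set_eq (image_set (rho n s t) (qorbit q n k)) (qorbit q n k) <->
  qorbit q n k (rho n s t k).
Proof.
move=> n_gt0 co_qn; split=> [inv_k|rho_k].
  by apply/inv_k/image_rho_qorbit; exists 0; rewrite mul1n modn_mod.
exact: set_eq_trans (image_rho_qorbit k) (qorbit_sym n_gt0 co_qn rho_k).
Qed.

End Rho.

Lemma eqz_modBM_nat n a b c d :
  ((a%:Z - b%:Z) * c%:Z = d%:Z %[mod n%:Z])%Z <-> a * c = d + b * c %[mod n].
Proof.
have shiftE : ((a%:Z - b%:Z) * c%:Z == d%:Z %[mod n%:Z])%Z =
              (a * c == d + b * c %[mod n]).
  rewrite -(eqz_modDr (b%:Z * c%:Z)) GRing.mulrBl GRing.subrK.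
  by rewrite -!PoszM -PoszD !modz_nat.
by split=> /eqP; [rewrite shiftE | rewrite -shiftE] => /eqP.
Qed.

Lemma rho_eq_modz n s t k a :
  rho n s t k = a * k %% n <->
  ((a%:Z - s%:Z) * k%:Z = (s * t)%:Z %[mod n%:Z])%Z.
Proof.
by rewrite /rho mulnDr addnC; split=> [/esym/eqz_modBM_nat | /eqz_modBM_nat/esym].
Qed.

Theorem lemma3p2 (q n s t : nat) (Q : nat -> Prop) :
  prime_power q -> 0 < n -> coprime q n ->
  s < n -> coprime s n ->
  t < n -> q * t = t %[mod n] ->
  is_qcoset q n Q ->
  (set_eq (image_set (rho n s t) Q) Q <->
   exists k j : nat, Q k /\
     (((q ^ j)%:Z - s%:Z) * k%:Z = (s * t)%:Z %[mod n%:Z])%Z).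
Proof.
move=> _ n_gt0 co_qn _ _ _ qt_t [i lt_in Q_qcoset].
have Q_orbit_i := set_eq_trans Q_qcoset (qcoset_ofE q lt_in).
have Q_orbit k : Q k -> set_eq Q (qorbit q n k).
  move=> /Q_orbit_i Qk.
  exact: set_eq_trans Q_orbit_i (set_eq_sym (qorbit_sym n_gt0 co_qn Qk)).
have rho_invariantE k : Q k ->
    set_eq (image_set (rho n s t) Q) Q <-> exists j, rho n s t k = q ^ j * k %% n.
  move=> Q_k; have Q_orbit_k := Q_orbit k Q_k.
  apply: iff_trans (set_eq_congr (image_set_eq _ Q_orbit_k) Q_orbit_k) _.
  exact: qorbit_rho_invariant.
have Q_i : Q i by apply/Q_orbit_i; exists 0; rewrite mul1n modn_small.
split=> [/(rho_invariantE i Q_i) [j /rho_eq_modz rho_i] |].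
  by exists i, j.
move=> [k [j [Q_k /rho_eq_modz rho_k]]].
by apply/(rho_invariantE k Q_k); exists j.
Qed.
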